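(* Let $f:\mathbb{R}^n\to\mathbb{R}$ be $C^2$ with all eigenvalues of the Hessian $D^2f(x)$ lying in $[\mu,L]$ for every $x$, where $0<\mu\le L$, and let $x^*$ be a minimizer of $f$. Fix a step size $0<\eta\le\frac{2}{L+\mu}$, a window length $m\ge1$, a regularization parameter $\lambda>0$ and an initial point $x_0$, and let $(x_k)$ be generated by Anderson-accelerated gradient descent with relaxation parameter $\beta=1$ (described in the context), with $\nabla f(x_k)\ne0$. Suppose the iterates converge to $x^*$, so that $\|x_k-x^*\|$ is sufficiently small for large $k$. Then there is a sequence $o(k)$ with $o(k)\to0$ as $k\to\infty$ such that for all sufficiently large $k$, $$\frac{\|\nabla f(x_{k+1})\|}{\|\nabla f(x_k)\|}\le \delta_k(1-\eta\mu)+o(k),\qquad \delta_k:=\frac{\|\Pi_k\nabla f(x_k)\|}{\|\nabla f(x_k)\|}\le1,$$ where $\Pi_k=I-U_k(U_k^\top U_k+\lambda I)^{-1}U_k^\top$.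
   Context: Norms are Euclidean $\ell^2$ norms (operator norm for matrices). Let $G(x)=x-\eta\nabla f(x)$. Anderson-accelerated gradient descent (AA-GD) with $\beta=1$: set $x_1=G(x_0)$; for $k\ge1$, let $m_k=\min\{m,k\}$, let $U_k=[U_{k,k-m_k},\dots,U_{k,k-1}]\in\mathbb{R}^{n\times m_k}$ with columns $U_{k,j}=\nabla f(x_k)-\nabla f(x_j)$, compute the weights $(\alpha^k_{k-m_k},\dots,\alpha^k_{k-1})^\top=(U_k^\top U_k+\lambda I)^{-1}U_k^\top\nabla f(x_k)$ (the minimizer of $\|\nabla f(x_k)-U_k\alpha\|^2+\lambda\|\alpha\|^2$), set $\alpha^k_k=1-\sum_{j=k-m_k}^{k-1}\alpha^k_j$ (so the weights sum to one), and define $x_{k+1}=\sum_{j=k-m_k}^{k}\alpha^k_j G(x_j)$. *)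

From HB Require Import structures.
From mathcomp Require Import all_boot all_order all_algebra.
From mathcomp Require Import all_classical all_reals all_analysis.
Set Implicit Arguments. Unset Strict Implicit. Unset Printing Implicit Defensive.
Import Order.TTheory GRing.Theory Num.Theory.
Import numFieldNormedType.Exports.
Local Open Scope ring_scope.

Definition enorm (R : realType) (n : nat) (v : 'cV[R]_n) : R :=
  Num.sqrt (\sum_(i < n) v i 0 ^+ 2).

Definition Gmap (R : realType) (n : nat) (eta : R) (g : 'cV[R]_n -> 'cV[R]_n)
  (x : 'cV[R]_n) : 'cV[R]_n := x - eta *: g x.

Definition mk (m k : nat) : nat := minn m k.

Definition Umat (R : realType) (n : nat) (g : 'cV[R]_n -> 'cV[R]_n)
  (x : nat -> 'cV[R]_n) (m k : nat) : 'M[R]_(n, mk m k) :=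
  \matrix_(i < n, j < mk m k) (g (x k) - g (x (k - mk m k + j)%N)) i 0.

Definition alphaAA (R : realType) (n : nat) (g : 'cV[R]_n -> 'cV[R]_n)
  (x : nat -> 'cV[R]_n) (m : nat) (lambda : R) (k : nat) : 'cV[R]_(mk m k) :=
  let U := Umat g x m k in
  invmx (U^T *m U + lambda%:M) *m U^T *m g (x k).

Definition PiAA (R : realType) (n : nat) (g : 'cV[R]_n -> 'cV[R]_n)
  (x : nat -> 'cV[R]_n) (m : nat) (lambda : R) (k : nat) : 'M[R]_n :=
  let U := Umat g x m k in
  1%:M - U *m invmx (U^T *m U + lambda%:M) *m U^T.

Definition AAGD_seq (R : realType) (n : nat) (eta : R) (g : 'cV[R]_n -> 'cV[R]_n)
  (m : nat) (lambda : R) (x : nat -> 'cV[R]_n) : Prop :=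
  x 1%N = Gmap eta g (x 0%N) /\
  forall k : nat, (1 <= k)%N ->
    let a := alphaAA g x m lambda k in
    x k.+1 = \sum_(j < mk m k) a j 0 *: Gmap eta g (x (k - mk m k + j)%N)
             + (1 - \sum_(j < mk m k) a j 0) *: Gmap eta g (x k).

From HB Require Import structures.
From mathcomp Require Import all_boot all_order all_algebra.
From mathcomp Require Import all_classical all_reals all_analysis.
From mathcomp Require Import ring lra zify.
Import Order.TTheory GRing.Theory Num.Theory.
Import numFieldNormedType.Exports.
Local Open Scope classical_set_scope.
Local Open Scope ring_scope.
Set Implicit Arguments. Unset Strict Implicit. Unset Printing Implicit Defensive.

(* Let S be the Hessian at the minimizer xs.  It is symmetric (the mixed second
   differences of f agree, by the mean value theorem), and its quadratic form lies
   between mu |v|^2 and L |v|^2 because the extreme Rayleigh quotients, attained on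
   the compact unit sphere, are eigenvalues.  Near xs, g y = S (y - xs) + o(|y - xs|),
   so |y - xs| and |g y| are comparable.

   With alpha the ridge coefficients and U = U_k, an AA-GD step reads
     x_{k+1} = x_k - eta (g_k - U alpha) - sum_j alpha_j (x_k - x_j),
   a gradient step from Pi_k g_k = g_k - U alpha followed by a displacement.  The
   ridge equations give lambda |alpha|^2 <= <U alpha, g_k>, hence |alpha|_1 =
   O(|U| |g_k| / lambda); the columns of U and the differences x_k - x_j tend to 0,
   so U alpha and the displacement are o(|g_k|).  As v - eta S v contracts by
   1 - eta mu when eta (L + mu) <= 2, |g_{k+1}| <= (1 - eta mu) |Pi_k g_k| + o(|g_k|).
   Finally |Pi_k g_k| <= |g_k|, since a ridge residual is never longer than the
   right-hand side. *)

Lemma ler_of_sqr {R : realDomainType} (a b : R) : 0 <= b -> a ^+ 2 <= b ^+ 2 -> a <= b.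
Proof. by move=> b0 ab; nra. Qed.

Lemma discriminant_le {R : realFieldType} (a b c : R) : 0 <= c ->
  (forall t, 0 <= a + 2 * b * t + c * t ^+ 2) -> b ^+ 2 <= a * c.
Proof.
move=> c0 nonneg; have [c_eq0|c_neq0] := eqVneq c 0.
  have [b_eq0|b_neq0] := eqVneq b 0; first by rewrite b_eq0 c_eq0 expr0n mulr0.
  have := nonneg (- (a + 1) / (2 * b)); rewrite c_eq0 mul0r addr0.
  have -> : 2 * b * (- (a + 1) / (2 * b)) = - (a + 1) by field; rewrite b_neq0.
  lra.
have c_gt0 : 0 < c by rewrite lt_def c_neq0 c0.
have := nonneg (- b / c).
have -> : a + 2 * b * (- b / c) + c * (- b / c) ^+ 2 = a - b ^+ 2 / c.
  by field; rewrite c_neq0.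
by rewrite subr_ge0 ler_pdivrMr // mulrC.
Qed.

Section Euclid.
Context {R : realType} {n : nat}.
Implicit Types (u v w : 'cV[R]_n) (a : R).

Definition dotv u v : R := \sum_i u i 0 * v i 0.

Lemma dotvC u v : dotv u v = dotv v u.
Proof. by apply: eq_bigr => i _; rewrite mulrC. Qed.

Lemma dotvDl u w v : dotv (u + w) v = dotv u v + dotv w v.
Proof. by rewrite /dotv -big_split; apply: eq_bigr => i _; rewrite !mxE mulrDl. Qed.

Lemma dotvDr u w v : dotv v (u + w) = dotv v u + dotv v w.
Proof. by rewrite dotvC dotvDl !(dotvC v). Qed.

Lemma dotvZl a u v : dotv (a *: u) v = a * dotv u v.
Proof. by rewrite /dotv mulr_sumr; apply: eq_bigr => i _; rewrite !mxE mulrA. Qed.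

Lemma dotvZr a u v : dotv v (a *: u) = a * dotv v u.
Proof. by rewrite dotvC dotvZl dotvC. Qed.

Lemma dotvNl u v : dotv (- u) v = - dotv u v.
Proof. by rewrite -scaleN1r dotvZl mulN1r. Qed.

Lemma dotvNr u v : dotv v (- u) = - dotv v u.
Proof. by rewrite dotvC dotvNl dotvC. Qed.

Lemma dotvBl u w v : dotv (u - w) v = dotv u v - dotv w v.
Proof. by rewrite dotvDl dotvNl. Qed.

Lemma dotvBr u w v : dotv v (u - w) = dotv v u - dotv v w.
Proof. by rewrite dotvDr dotvNr. Qed.

Lemma dotv0l v : dotv 0 v = 0.
Proof. by rewrite /dotv big1 // => i _; rewrite mxE mul0r. Qed.

Lemma dotv0r v : dotv v 0 = 0.
Proof. by rewrite dotvC dotv0l. Qed.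

Lemma dotvv_ge0 v : 0 <= dotv v v.
Proof. by apply: sumr_ge0 => i _; rewrite -expr2 sqr_ge0. Qed.

Lemma dotvv_eq0 v : dotv v v = 0 -> v = 0.
Proof.
move=> /eqP; rewrite psumr_eq0 => [/allP v0|i _]; last by rewrite -expr2 sqr_ge0.
apply/matrixP => i j; rewrite ord1 mxE.
by have /implyP/(_ isT) := v0 i (mem_index_enum i); rewrite -expr2 sqrf_eq0 => /eqP.
Qed.

Lemma dotv_delta v i : dotv v (delta_mx i 0) = v i 0.
Proof.
rewrite /dotv (bigD1 i) //= big1 => [|j ji]; rewrite mxE.
  by rewrite !eqxx mulr1 addr0.
by rewrite (negbTE ji) mulr0.
Qed.

Lemma enorm_sqr v : enorm v ^+ 2 = dotv v v.
Proof.
rewrite /enorm sqr_sqrtr; last by apply: sumr_ge0 => i _; rewrite sqr_ge0.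
by apply: eq_bigr => i _; rewrite expr2.
Qed.

Lemma enorm_ge0 v : 0 <= enorm v.
Proof. exact: sqrtr_ge0. Qed.

Lemma enorm_eq0 v : enorm v = 0 -> v = 0.
Proof. by move=> v0; apply: dotvv_eq0; rewrite -enorm_sqr v0 expr0n. Qed.

Lemma enorm_gt0 v : v != 0 -> 0 < enorm v.
Proof.
by move=> v0; rewrite lt_def enorm_ge0 andbT; apply: contra v0 => /eqP/enorm_eq0->.
Qed.

Lemma enorm0 : enorm (0 : 'cV[R]_n) = 0.
Proof. by rewrite /enorm big1 ?sqrtr0 // => i _; rewrite mxE expr0n. Qed.

Lemma enormZ a v : enorm (a *: v) = `|a| * enorm v.
Proof.
rewrite /enorm -sqrtr_sqr -sqrtrM ?sqr_ge0 // mulr_sumr.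
by congr Num.sqrt; apply: eq_bigr => i _; rewrite mxE exprMn.
Qed.

Lemma enormN v : enorm (- v) = enorm v.
Proof. by rewrite -scaleN1r enormZ normrN normr1 mul1r. Qed.

Lemma entry_le_enorm v i : `|v i 0| <= enorm v.
Proof.
rewrite -ler_sqr ?nnegrE ?enorm_ge0 // real_normK ?num_real // enorm_sqr.
rewrite /dotv (bigD1 i) //= -expr2 lerDl.
by apply: sumr_ge0 => j _; rewrite -expr2 sqr_ge0.
Qed.



Lemma cauchy_schwarz u v : dotv u v ^+ 2 <= dotv u u * dotv v v.
Proof.
apply: discriminant_le; first exact: dotvv_ge0.
move=> t; have := dotvv_ge0 (u + t *: v).
by rewrite !dotvDl !dotvDr !dotvZl !dotvZr [dotv v u]dotvC; lra.
Qed.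

Lemma normr_dotv_le u v : `|dotv u v| <= enorm u * enorm v.
Proof.
apply: ler_of_sqr; first by rewrite mulr_ge0 // enorm_ge0.
by rewrite real_normK ?num_real // exprMn !enorm_sqr cauchy_schwarz.
Qed.

Lemma dotv_le u v : dotv u v <= enorm u * enorm v.
Proof. exact: le_trans (ler_norm _) (normr_dotv_le _ _). Qed.

Lemma enormD u v : enorm (u + v) <= enorm u + enorm v.
Proof.
apply: ler_of_sqr; first by rewrite addr_ge0 // enorm_ge0.
rewrite enorm_sqr sqrrD !enorm_sqr dotvDl !dotvDr [dotv v u]dotvC.
by have := dotv_le u v; lra.
Qed.

Lemma enormB u v : enorm (u - v) <= enorm u + enorm v.
Proof. by rewrite -(enormN v) enormD. Qed.

Lemma enorm_sum p (F : 'I_p -> 'cV[R]_n) : enorm (\sum_j F j) <= \sum_j enorm (F j).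
Proof.
elim/big_rec2: _ => [|j y1 y2 _ IH]; first by rewrite enorm0.
exact: le_trans (enormD _ _) (lerD (lexx _) IH).
Qed.

End Euclid.

Lemma dotv_mulmx {R : realType} {n p : nat} (A : 'M[R]_(n, p))
    (x : 'cV[R]_n) (y : 'cV[R]_p) :
  dotv x (A *m y) = dotv (A^T *m x) y.
Proof.
rewrite /dotv; under eq_bigr do rewrite mxE mulr_sumr.
under [RHS]eq_bigr do rewrite mxE mulr_suml.
rewrite exchange_big; apply: eq_bigr => i _; apply: eq_bigr => j _.
by rewrite mxE; ring.
Qed.

Section QuadraticForm.
Context {R : realType} {n : nat}.
Implicit Types (S : 'M[R]_n) (u v w : 'cV[R]_n).

Definition qform S v := dotv v (S *m v).

Definition qform_within S (mu L : R) :=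
  forall v, mu * enorm v ^+ 2 <= qform S v <= L * enorm v ^+ 2.

Lemma qform0 S : qform S 0 = 0.
Proof. by rewrite /qform dotv0l. Qed.

Lemma qformZ S a v : qform S (a *: v) = a ^+ 2 * qform S v.
Proof. by rewrite /qform -scalemxAr dotvZl dotvZr mulrA expr2. Qed.

Lemma qform1 v : qform 1%:M v = enorm v ^+ 2.
Proof. by rewrite /qform mul1mx enorm_sqr. Qed.

Lemma qform_shift S (a : R) v : qform (S - a%:M) v = qform S v - a * enorm v ^+ 2.
Proof. by rewrite /qform mulmxBl mul_scalar_mx dotvBr dotvZr enorm_sqr. Qed.

Lemma dotv_sym S u v : S^T = S -> dotv u (S *m v) = dotv (S *m u) v.
Proof. by move=> S_sym; rewrite dotv_mulmx S_sym. Qed.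

Lemma trmx_shift S (a : R) : S^T = S -> (S - a%:M)^T = S - a%:M.
Proof. by move=> S_sym; rewrite linearB /= S_sym tr_scalar_mx. Qed.

Lemma psd_cauchy_schwarz S u v : S^T = S -> (forall w, 0 <= qform S w) ->
  dotv u (S *m v) ^+ 2 <= qform S u * qform S v.
Proof.
move=> S_sym S_psd; apply: discriminant_le => // t.
have := S_psd (u + t *: v).
rewrite /qform mulmxDr -scalemxAr !dotvDl !dotvDr !dotvZl !dotvZr.
by rewrite [dotv v (S *m u)]dotvC -dotv_sym //; lra.
Qed.

Lemma psd_kernel S v : S^T = S -> (forall w, 0 <= qform S w) ->
  qform S v = 0 -> S *m v = 0.
Proof.
move=> S_sym S_psd Sv0; apply: dotvv_eq0; apply/eqP.
rewrite -sqrf_eq0 eq_le sqr_ge0 andbT.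
by have := psd_cauchy_schwarz (S *m v) v S_sym S_psd; rewrite Sv0 mulr0.
Qed.

Lemma enorm_mulmx_sqr_le S (M : R) v : S^T = S -> 0 <= M ->
  (forall w, 0 <= qform S w <= M * enorm w ^+ 2) ->
  enorm (S *m v) ^+ 2 <= M * qform S v.
Proof.
move=> S_sym M_ge0 S_bd.
have S_psd w : 0 <= qform S w by case/andP: (S_bd w).
set X := enorm (S *m v) ^+ 2.
have X_sqr_le : X ^+ 2 <= qform S v * (M * X).
  have /andP[_ QSv_le] := S_bd (S *m v).
  apply: le_trans (ler_wpM2l (S_psd v) QSv_le).
  by have := psd_cauchy_schwarz v (S *m v) S_sym S_psd; rewrite dotv_sym // -enorm_sqr.
have [->|X_neq0] := eqVneq X 0; first by rewrite mulr_ge0.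
have X_gt0 : 0 < X by rewrite lt_def X_neq0 sqr_ge0.
by rewrite -(ler_pM2l X_gt0); nra.
Qed.

End QuadraticForm.

Section WithinBounds.
Context {R : realType} {n : nat}.
Variables (S : 'M[R]_n) (mu L : R).
Hypotheses (S_sym : S^T = S) (S_within : qform_within S mu L).
Hypotheses (mu_gt0 : 0 < mu) (mu_le_L : mu <= L).

Lemma qform_within_psd v : 0 <= qform S v <= L * enorm v ^+ 2.
Proof.
case/andP: (S_within v) => lo ->; rewrite andbT.
by apply: le_trans lo; rewrite mulr_ge0 ?sqr_ge0 // ltW.
Qed.

Lemma enorm_mulmx_ge v : mu * enorm v <= enorm (S *m v).
Proof.
have [->|v_neq0] := eqVneq v 0; first by rewrite enorm0 mulr0 enorm_ge0.
have v_gt0 := enorm_gt0 v_neq0; rewrite -(ler_pM2l v_gt0).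
have := dotv_le v (S *m v); case/andP: (S_within v) => lo _.
by rewrite -/(qform S v); nra.
Qed.

Let L_ge0 : 0 <= L. Proof. exact: le_trans (ltW mu_gt0) mu_le_L. Qed.

Lemma enorm_mulmx_le v : enorm (S *m v) <= L * enorm v.
Proof.
have := enorm_mulmx_sqr_le v S_sym L_ge0 qform_within_psd.
have := ler_wpM2l L_ge0 (dotv_le v (S *m v)); rewrite -/(qform S v) => Q_le Sv_sqr_le.
have [->|Sv_neq0] := eqVneq (S *m v) 0; first by rewrite enorm0 mulr_ge0 ?enorm_ge0.
rewrite -(ler_pM2l (enorm_gt0 Sv_neq0)).
by nra.
Qed.

(* With A := S - mu I, v - eta S v = (1 - eta mu) v - eta A v, and the cross
   term -2 eta (1 - eta mu) q_A(v) absorbs eta^2 |A v|^2 <= eta^2 (L - mu) q_A(v)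
   exactly when eta (L + mu) <= 2. *)
Lemma gd_contraction (eta : R) v : 0 < eta -> eta * (L + mu) <= 2 ->
  enorm (v - eta *: (S *m v)) <= (1 - eta * mu) * enorm v.
Proof.
move=> eta_gt0 eta_le.
have eta_mu_le1 : eta * mu <= 1.
  have : 0 <= eta * (L - mu) by rewrite mulr_ge0 ?subr_ge0 // ltW.
  lra.
set A := S - mu%:M.
have A_bd w : 0 <= qform A w <= (L - mu) * enorm w ^+ 2.
  by rewrite qform_shift; case/andP: (S_within w) => lo hi; apply/andP; split; lra.
have Lmu_ge0 : 0 <= L - mu by rewrite subr_ge0.
have Av_le := enorm_mulmx_sqr_le v (trmx_shift mu S_sym) Lmu_ge0 A_bd.
have /andP[QA0 _] := A_bd v.
have -> : v - eta *: (S *m v) = (1 - eta * mu) *: v - eta *: (A *m v).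
  by rewrite /A mulmxBl mul_scalar_mx; apply/matrixP => i j; rewrite !mxE; ring.
apply: ler_of_sqr; first by rewrite mulr_ge0 ?enorm_ge0 ?subr_ge0.
rewrite enorm_sqr dotvBl !dotvBr !dotvZl !dotvZr [dotv (A *m v) v]dotvC.
rewrite -/(qform A v) -!enorm_sqr exprMn.
have := ler_wpM2l (sqr_ge0 eta) Av_le.
have : 0 <= eta * qform A v * (2 - eta * (L + mu)).
  by rewrite !mulr_ge0 ?subr_ge0 // ltW.
by nra.
Qed.

End WithinBounds.

Section Rayleigh.
Context {R : realType} {n : nat}.
Implicit Types (S : 'M[R]_n) (v : 'cV[R]_n).

Lemma continuous_sum (T : topologicalType) p (F : 'I_p -> T -> R) :
  (forall i, continuous (F i)) -> continuous (fun t => \sum_i F i t).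
Proof.
move=> F_cont; rewrite -fct_sumE.
apply: (big_ind (fun h : T -> R => continuous h)) => //.
- by move=> t; exact: cvg_cst.
- by move=> h1 h2 h1_cont h2_cont t; exact: (continuousD (h1_cont t) (h2_cont t)).
Qed.

Lemma continuous_qform_trmx S : continuous (fun r : 'rV[R]_n => qform S r^T).
Proof.
have coord j : continuous (fun r : 'rV[R]_n => r 0 j) by move=> r; apply: coord_continuous.
have -> : (fun r : 'rV[R]_n => qform S r^T) =
          (fun r => \sum_i r 0 i * \sum_j S i j * r 0 j).
  apply/funext => r; apply: eq_bigr => i _; rewrite !mxE; congr (_ * _).
  by apply: eq_bigr => j _; rewrite !mxE.
apply: continuous_sum => i r; apply: continuousM; first exact: coord.
by apply: continuous_sum => j r'; apply: continuousM; [exact: cst_continuous | exact: coord].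
Qed.

Lemma enorm_delta i : enorm (delta_mx i 0 : 'cV[R]_n) = 1.
Proof.
by apply/eqP; rewrite -sqrp_eq1 ?enorm_ge0 // enorm_sqr dotv_delta mxE !eqxx.
Qed.

Lemma qform_sphere_min S : (0 < n)%N ->
  exists2 c, enorm c = 1 & forall v, enorm v = 1 -> qform S c <= qform S v.
Proof.
move=> n_gt0.
pose A := [set r : 'rV[R]_n | qform 1%:M r^T = 1].
have A_unit r : A r = (enorm r^T = 1).
  rewrite /A /= qform1; apply/propext; split => [r1|->]; last by rewrite expr1n.
  by apply/eqP; rewrite -sqrp_eq1 ?enorm_ge0 // r1.
have A_cpt : compact A.
  apply: bounded_closed_compact.
    exists 1; split => // M M_gt1 r; rewrite A_unit => r1.
    rewrite /= -[`|r|]/(mx_norm r) mx_normrE.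
    apply/bigmax_leP; split => [|[i j] _]; first by apply: ltW; lra.
    rewrite ord1 (le_trans _ (ltW M_gt1)) // -r1.
    by have := entry_le_enorm r^T j; rewrite mxE.
  apply: (preimage_closed (f := fun r => qform 1%:M r^T) (D := [set x | x = 1])).
    by move=> r _; exact: continuous_qform_trmx.
  exact: closed_eq.
have A0 : A !=set0.
  by exists (delta_mx 0 (Ordinal n_gt0)); rewrite A_unit trmx_delta enorm_delta.
have [c Ac c_min] := EVT_min_rV A0 A_cpt (continuous_subspaceT (continuous_qform_trmx (S := S))).
exists c^T => [|v v1]; first by move: Ac; rewrite inE A_unit.
by have := c_min v^T; rewrite !inE !A_unit trmxK => ->.
Qed.

Lemma qform_ge_sphere_min S c v : enorm c = 1 ->
  (forall w, enorm w = 1 -> qform S c <= qform S w) ->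
  qform S c * enorm v ^+ 2 <= qform S v.
Proof.
move=> c1 c_min; have [->|v_neq0] := eqVneq v 0; first by rewrite enorm0 expr0n mulr0 qform0.
have v_gt0 := enorm_gt0 v_neq0.
have := c_min ((enorm v)^-1 *: v); rewrite qformZ enormZ ger0_norm ?invr_ge0 ?enorm_ge0 //.
rewrite mulVf ?gt_eqF // => /(_ erefl).
by rewrite -ler_pdivlMr ?exprn_gt0 // mulrC exprVn.
Qed.

(* The minimum of the Rayleigh quotient is an eigenvalue: S - a I is positive
   semidefinite and its form vanishes at the minimizer. *)
Lemma eigenvalue_qform_lower_bound S : (0 < n)%N -> S^T = S ->
  exists2 a, eigenvalue S a & forall v, a * enorm v ^+ 2 <= qform S v.
Proof.
move=> n_gt0 S_sym; have [c c1 c_min] := qform_sphere_min S n_gt0.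
have lb v := qform_ge_sphere_min v c1 c_min.
exists (qform S c) => //.
set B := S - (qform S c)%:M.
have B_psd w : 0 <= qform B w by rewrite qform_shift subr_ge0.
have Bc0 : B *m c = 0.
  by apply: psd_kernel (trmx_shift _ S_sym) B_psd _; rewrite qform_shift c1 expr1n mulr1 subrr.
have Sc : S *m c = qform S c *: c.
  by apply/eqP; rewrite -subr_eq0 -mul_scalar_mx -mulmxBl Bc0.
apply/eigenvalueP; exists c^T; first by rewrite -{1}S_sym -trmx_mul Sc linearZ.
apply/eqP => /(congr1 trmx); rewrite trmxK trmx0 => c0.
by move: c1; rewrite c0 enorm0 => /eqP; rewrite eq_sym oner_eq0.
Qed.

End Rayleigh.

Lemma qform_within_eigenvalues {R : realType} {n : nat} (S : 'M[R]_n) (mu L : R) : S^T = S ->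
  (forall a, eigenvalue S a -> mu <= a <= L) -> qform_within S mu L.
Proof.
move=> S_sym S_spec v; case: n S S_sym S_spec v => [|k] S S_sym S_spec v.
  by rewrite (_ : v = 0) ?enorm0 ?expr0n ?mulr0 ?qform0 ?lexx //; apply/matrixP => -[].
have [a Sa a_lb] := eigenvalue_qform_lower_bound (ltn0Sn k) S_sym.
have NS_sym : (- S)^T = - S by rewrite linearN /= S_sym.
have [b NSb b_lb] := eigenvalue_qform_lower_bound (ltn0Sn k) NS_sym.
have /andP[mu_a _] := S_spec a Sa.
have /andP[_ b_L] : mu <= - b <= L.
  apply: S_spec; move/eigenvalueP: NSb => [w w_eig w_neq0]; apply/eigenvalueP.
  by exists w => //; rewrite scaleNr -w_eig mulmxN opprK.
have := a_lb v; have := b_lb v; rewrite /qform mulNmx dotvNr -/(qform S v).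
have := sqr_ge0 (enorm v) => v0 h1 h2; apply/andP; split; nra.
Qed.

Section Linearization.
Context {R : realType} {n : nat}.
Implicit Types (v w : 'cV[R]_n).

Lemma mxnorm_le_enorm v : `|v| <= enorm v.
Proof.
rewrite -[`|v|]/(mx_norm v) mx_normrE.
apply/bigmax_leP; split => [|[i j] _]; first exact: enorm_ge0.
by rewrite ord1; exact: entry_le_enorm.
Qed.

Lemma enorm_le_mxnorm v : enorm v <= n%:R * `|v|.
Proof.
have entry_le i : `|v i 0| <= `|v|.
  by rewrite -[`|v|]/(mx_norm v) mx_normrE; apply/bigmax_geP; right; exists (i, 0).
apply: ler_of_sqr; first by rewrite mulr_ge0.
rewrite enorm_sqr /dotv (@le_trans _ _ (\sum_(i < n) `|v| ^+ 2)) //.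
  apply: ler_sum => i _; rewrite -expr2 -real_normK ?num_real //.
  by rewrite ler_sqr ?nnegrE.
rewrite sumr_const card_ord exprMn -[X in X <= _]mulr_natl.
apply: ler_wpM2r; first exact: sqr_ge0.
by case: n => [|k]; rewrite ?expr0n // -natrX ler_nat expnS leq_pmulr.
Qed.

Definition frechet_at (g : 'cV[R]_n -> 'cV[R]_n) (p : 'cV[R]_n) (A : 'M[R]_n) :=
  forall eps, 0 < eps -> exists2 d, 0 < d & forall w, enorm w < d ->
    enorm (g (w + p) - g p - A *m w) <= eps * enorm w.

Lemma differentiable_frechet_at g p A : differentiable g p ->
  (forall v, 'd g p v = A *m v) -> frechet_at g p A.
Proof.
move=> g_diff dgE eps eps_gt0.
have n1_gt0 : 0 < n%:R + 1 :> R by rewrite ltr_wpDl.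
have /eqaddoP/(_ (eps / (n%:R + 1))) := diff_locally g_diff.
rewrite divr_gt0 // => /(_ isT) /nbhs_norm0P [d d_gt0 small].
exists d => // w w_lt; rewrite -dgE.
have /small /= : `|w| < d by apply: le_lt_trans (mxnorm_le_enorm w) w_lt.
rewrite opprD addrA => err_le.
apply: (le_trans (enorm_le_mxnorm _)); apply: (le_trans (ler_wpM2l (ler0n _ _) err_le)).
rewrite mulrA ler_pM ?normr_ge0 ?mxnorm_le_enorm //.
  by rewrite mulr_ge0 // divr_ge0 // ltW.
by rewrite mulrCA ger_pMr // ler_pdivrMr // mul1r lerDl.
Qed.

End Linearization.

Section Gradient.
Context {R : realType} {n : nat}.
Variables (f : 'cV[R]_n -> R) (g : 'cV[R]_n -> 'cV[R]_n).
Hypothesis f_grad : forall y, differentiable f y /\ forall v, 'd f y v = dotv (g y) v.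

Lemma is_derive_line (p u : 'cV[R]_n) (r : R) :
  is_derive r 1 (fun s : R => f (p + s *: u)) (dotv (g (p + r *: u)) u).
Proof.
have [f_diff dfE] := f_grad (p + r *: u).
have E : (fun h : R => h^-1 *: (f (p + (h *: 1 + r) *: u) - f (p + r *: u))) =
         (fun h : R => h^-1 *: ((f \o shift (p + r *: u)) (h *: u) - f (p + r *: u))).
  apply/funext => h /=; congr (_ *: (f _ - _)).
  by rewrite scalerDl -[h%:A]/(h * 1) mulr1 addrCA.
apply: DeriveDef; first by rewrite /derivable /= E; exact: diff_derivable.
by rewrite /derive /= E -/(derive f _ u) deriveE // dfE.
Qed.

Lemma gradient_eq0_at_min xs : (forall y, f xs <= f y) -> g xs = 0.
Proof.
move=> xs_min; pose phi s := f (xs + s *: g xs).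
have phi_min (t : R) : t \in `]-1, 1[%R -> phi 0 <= phi t by rewrite /phi scale0r addr0.
have phi_derivable (t : R) : t \in `]-1, 1[%R -> derivable phi t 1.
  by case: (is_derive_line xs (g xs) t).
have zero_in : (0 : R) \in `]-1, 1[%R by rewrite in_itv /= ltrN10 ltr01.
have N1_le1 : (-1 : R) <= 1 by lra.
have [_ phi'0] := derive1_at_min N1_le1 phi_derivable zero_in phi_min.
have [_ phi'E] := is_derive_line xs (g xs) 0.
by move: phi'0; rewrite phi'E scale0r addr0 => /dotvv_eq0.
Qed.

End Gradient.

Section HessianSymmetry.
Context {R : realType} {n : nat}.
Variables (f : 'cV[R]_n -> R) (g : 'cV[R]_n -> 'cV[R]_n) (p : 'cV[R]_n) (A : 'M[R]_n).
Hypothesis f_grad : forall y, differentiable f y /\ forall v, 'd f y v = dotv (g y) v.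
Hypothesis g_frechet : frechet_at g p A.

Definition second_difference (u v : 'cV[R]_n) (t : R) :=
  f (p + t *: v + t *: u) - f (p + t *: u) - f (p + t *: v) + f p.

Lemma second_difference_sym (u v : 'cV[R]_n) (t : R) :
  second_difference v u t = second_difference u v t.
Proof. by rewrite /second_difference [p + t *: u + _]addrAC; lra. Qed.

Lemma second_difference_mvt (u v : 'cV[R]_n) (t : R) : 0 <= t ->
  exists2 c, 0 <= c <= t &
  second_difference u v t = t * dotv (g (p + t *: v + c *: u) - g (p + c *: u)) u.
Proof.
move=> t_ge0; pose phi r := f (p + t *: v + r *: u) - f (p + r *: u).
have phi' (r : R) :
    is_derive r 1 phi (dotv (g (p + t *: v + r *: u)) u - dotv (g (p + r *: u)) u).
  by apply: is_deriveB; exact: is_derive_line.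
have phi_cont : {within `[0, t], continuous phi}.
  apply: continuous_subspaceT => r; apply: differentiable_continuous.
  by apply/derivable1_diffP; case: (phi' r).
have [c /[!in_itv] /= c_in phiE] := MVT_segment t_ge0 (fun r _ => phi' r) phi_cont.
exists c => //; move: phiE; rewrite /phi /second_difference dotvBl subr0 !scale0r !addr0.
by lra.
Qed.

(* Along the mean-value point, the gradient difference is t A v up to two
   linearization errors, at the displacements t v + c u and c u. *)
Lemma second_difference_approx (u v : 'cV[R]_n) (t eps d : R) : 0 < eps ->
  (forall w, enorm w < d -> enorm (g (w + p) - g p - A *m w) <= eps * enorm w) ->
  0 < t -> t * (enorm u + enorm v) < d ->
  `|second_difference u v t - t ^+ 2 * dotv (A *m v) u|
    <= t ^+ 2 * eps * ((enorm v + 2 * enorm u) * enorm u).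
Proof.
move=> eps_gt0 lin t_gt0 t_small.
have [c /andP[c_ge0 c_le] ->] := second_difference_mvt u v (ltW t_gt0).
have u0 := enorm_ge0 u; have v0 := enorm_ge0 v.
pose err w := g (w + p) - g p - A *m w.
have err_le w : enorm w <= t * (enorm v + enorm u) ->
    enorm (err w) <= eps * (t * (enorm v + enorm u)).
  move=> w_le; apply: le_trans (lin w _) _; first by apply: le_lt_trans w_le _; lra.
  by rewrite ler_wpM2l // ltW.
have e1_le : enorm (err (t *: v + c *: u)) <= eps * (t * (enorm v + enorm u)).
  apply/err_le/(le_trans (enormD _ _)).
  by rewrite !enormZ !ger0_norm ?(ltW t_gt0) //; nra.
have e2_le : enorm (err (c *: u)) <= eps * (t * enorm u).
  apply: le_trans (lin _ _) _; rewrite enormZ ger0_norm //; first by nra.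
  by rewrite ler_wpM2l ?ler_wpM2r // ltW.
have -> : g (p + t *: v + c *: u) - g (p + c *: u)
          = t *: (A *m v) + (err (t *: v + c *: u) - err (c *: u)).
  rewrite /err (addrC _ p) (addrC (c *: u)) !addrA mulmxDr -!scalemxAr.
  by apply/matrixP => i j; rewrite !mxE; ring.
rewrite dotvDl dotvZl mulrDr mulrA -expr2 addrC addKr normrM ger0_norm ?(ltW t_gt0) //.
have E_sum : enorm (err (t *: v + c *: u) - err (c *: u))
             <= eps * t * (enorm v + 2 * enorm u).
  by apply: le_trans (enormB _ _) _; nra.
have := normr_dotv_le (err (t *: v + c *: u) - err (c *: u)) u.
move=> /le_trans /(_ (ler_wpM2r u0 E_sum)) /(ler_wpM2l (ltW t_gt0)).
by nra.
Qed.

Lemma dotv_mulmx_sym (u v : 'cV[R]_n) : dotv (A *m v) u = dotv (A *m u) v.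
Proof.
apply/eqP; rewrite -subr_eq0 -normr_le0; apply/ler_addgt0Pr => e e_gt0; rewrite add0r.
have u0 := enorm_ge0 u; have v0 := enorm_ge0 v.
set C := (enorm v + 2 * enorm u) * enorm u + (enorm u + 2 * enorm v) * enorm v.
have C_ge0 : 0 <= C by rewrite /C; nra.
have eps_gt0 : 0 < e / (C + 1) by rewrite divr_gt0 //; lra.
have [d d_gt0 lin] := g_frechet eps_gt0.
pose t := d / (2 * (enorm u + enorm v + 1)).
have t_gt0 : 0 < t by rewrite divr_gt0 //; lra.
have t_small : t * (enorm u + enorm v) < d.
  by rewrite /t mulrAC ltr_pdivrMr ?ltr_pM2l //; lra.
have t_small' : t * (enorm v + enorm u) < d by rewrite addrC.
have approx_uv := second_difference_approx eps_gt0 lin t_gt0 t_small.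
have := second_difference_approx eps_gt0 lin t_gt0 t_small'.
rewrite second_difference_sym => approx_vu.
have t2_gt0 : 0 < t ^+ 2 by rewrite exprn_gt0.
rewrite -(ler_pM2l t2_gt0) -{1}[t ^+ 2]ger0_norm ?sqr_ge0 // -normrM.
have -> : t ^+ 2 * (dotv (A *m v) u - dotv (A *m u) v)
          = (second_difference u v t - t ^+ 2 * dotv (A *m u) v)
            - (second_difference u v t - t ^+ 2 * dotv (A *m v) u) by ring.
apply: le_trans (ler_normB _ _) _.
have eC_le : e / (C + 1) * C <= e.
  by rewrite mulrAC ler_pdivrMr ?ler_pM2l //; lra.
move: approx_uv approx_vu (ler_wpM2l (sqr_ge0 t) eC_le); rewrite /C.
by nra.
Qed.

Lemma hessian_sym : A^T = A.
Proof.
apply/matrixP => i j; rewrite mxE.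
have := dotv_mulmx_sym (delta_mx i 0) (delta_mx j 0).
by rewrite !dotv_delta -!colE !mxE => ->.
Qed.

End HessianSymmetry.

Section Combination.
Context {R : realType} {n p : nat}.

Lemma mulmx_sum_col (U : 'M[R]_(n, p)) (a : 'cV[R]_p) : U *m a = \sum_j a j 0 *: col j U.
Proof.
apply/matrixP => i k; rewrite ord1 !mxE summxE; apply: eq_bigr => j _.
by rewrite !mxE mulrC.
Qed.

Lemma enorm_comb_le (F : 'I_p -> 'cV[R]_n) (a : 'cV[R]_p) (s : R) :
  (forall j, enorm (F j) <= s) -> enorm (\sum_j a j 0 *: F j) <= s * \sum_j `|a j 0|.
Proof.
move=> F_le; apply: le_trans (enorm_sum _) _; rewrite mulr_sumr.
by apply: ler_sum => j _; rewrite enormZ mulrC ler_wpM2r.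
Qed.

Lemma sum_abs_sqr_le (a : 'cV[R]_p) : (\sum_j `|a j 0|) ^+ 2 <= p%:R * dotv a a.
Proof.
have := cauchy_schwarz (\col_j `|a j 0|) (const_mx 1).
rewrite /dotv (eq_bigr (fun j => `|a j 0|)) => [|j _]; last by rewrite !mxE mulr1.
rewrite [X in _ * X](eq_bigr (fun=> 1)) => [|j _]; last by rewrite !mxE mulr1.
rewrite sumr_const card_ord mulrC; congr (_ <= _ * _); apply: eq_bigr => j _.
by rewrite !mxE -!expr2 real_normK ?num_real.
Qed.

End Combination.

Section Ridge.
Context {R : realType} {n p : nat}.
Variables (U : 'M[R]_(n, p)) (lam : R) (b : 'cV[R]_n).
Hypothesis lam_gt0 : 0 < lam.

Definition ridge_coef : 'cV[R]_p := invmx (U^T *m U + lam%:M) *m U^T *m b.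

Lemma qform_ridge_gram (a : 'cV[R]_p) :
  dotv a ((U^T *m U + lam%:M) *m a) = enorm (U *m a) ^+ 2 + lam * enorm a ^+ 2.
Proof.
by rewrite mulmxDl -mulmxA dotvDr dotv_mulmx trmxK mul_scalar_mx dotvZr !enorm_sqr.
Qed.

Lemma ridge_gram_sym : (U^T *m U + lam%:M)^T = U^T *m U + lam%:M.
Proof. by rewrite linearD /= trmx_mul trmxK tr_scalar_mx. Qed.

Lemma ridge_gram_unit : U^T *m U + lam%:M \in unitmx.
Proof.
rewrite unitmxE unitfE; apply/negP => /det0P [a a_neq0 aM0].
have : (U^T *m U + lam%:M) *m a^T = 0.
  by rewrite -{1}ridge_gram_sym -trmx_mul aM0 trmx0.
move=> /(congr1 (dotv a^T)); rewrite qform_ridge_gram dotv0r => eq0.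
have : lam * enorm a^T ^+ 2 <= 0 by have := sqr_ge0 (enorm (U *m a^T)); lra.
rewrite pmulr_rle0 // => a_le0.
have /eqP/enorm_eq0/(congr1 trmx) : enorm a^T == 0.
  by rewrite -sqrf_eq0 eq_le a_le0 sqr_ge0.
rewrite trmxK trmx0 => a0.
by rewrite a0 eqxx in a_neq0.
Qed.

Lemma ridge_normal_eq : (U^T *m U + lam%:M) *m ridge_coef = U^T *m b.
Proof. by rewrite /ridge_coef !mulmxA mulmxV ?mul1mx // ridge_gram_unit. Qed.

Lemma ridge_energy :
  enorm (U *m ridge_coef) ^+ 2 + lam * enorm ridge_coef ^+ 2
  = dotv (U *m ridge_coef) b.
Proof. by rewrite -qform_ridge_gram ridge_normal_eq dotv_mulmx trmxK. Qed.

Lemma enorm_ridge_residual_le : enorm (b - U *m ridge_coef) <= enorm b.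
Proof.
apply: ler_of_sqr; first exact: enorm_ge0.
rewrite !enorm_sqr dotvBl !dotvBr [dotv b (U *m _)]dotvC -!enorm_sqr.
have := ridge_energy; have := mulr_ge0 (ltW lam_gt0) (sqr_ge0 (enorm ridge_coef)).
by nra.
Qed.

(* lam |a|^2 <= <U a, b> <= s |a|_1 |b|, and |a|_1^2 <= p |a|^2. *)
Lemma ridge_coef_l1_le (s : R) : 0 <= s -> (forall j, enorm (col j U) <= s) ->
  \sum_j `|ridge_coef j 0| <= p%:R * s * enorm b / lam.
Proof.
move=> s_ge0 col_le; set a := ridge_coef; set A1 := \sum_j `|a j 0|.
have A1_ge0 : 0 <= A1 by apply: sumr_ge0 => j _.
have Ua_le : enorm (U *m a) <= s * A1 by rewrite mulmx_sum_col enorm_comb_le.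
have lam_a : lam * enorm a ^+ 2 <= s * A1 * enorm b.
  have := ridge_energy; have := dotv_le (U *m a) b.
  have := ler_wpM2r (enorm_ge0 b) Ua_le; have := sqr_ge0 (enorm (U *m a)).
  by nra.
have l1_l2 := sum_abs_sqr_le a; rewrite -/A1 -enorm_sqr in l1_l2.
rewrite ler_pdivlMr //.
have [A1_0|A1_neq0] := eqVneq A1 0; first by rewrite A1_0 mul0r !mulr_ge0 ?enorm_ge0.
have A1_gt0 : 0 < A1 by rewrite lt_def A1_neq0.
rewrite -(ler_pM2l A1_gt0).
have := ler_wpM2l (ler0n _ p) lam_a; have := ler_wpM2l (ltW lam_gt0) l1_l2.
by nra.
Qed.

Lemma enorm_ridge_comb_le (s : R) (D : 'I_p -> 'cV[R]_n) : 0 <= s ->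
  (forall j, enorm (col j U) <= s) -> (forall j, enorm (D j) <= s) ->
  enorm (\sum_j ridge_coef j 0 *: D j) <= p%:R * s ^+ 2 * enorm b / lam.
Proof.
move=> s_ge0 col_le D_le; apply: le_trans (enorm_comb_le _ D_le) _.
have -> : p%:R * s ^+ 2 * enorm b / lam = s * (p%:R * s * enorm b / lam) by ring.
by apply: ler_wpM2l => //; exact: ridge_coef_l1_le.
Qed.

End Ridge.

Section AndersonCoefficients.
Context {R : realType} {n : nat}.
Variables (g : 'cV[R]_n -> 'cV[R]_n) (x : nat -> 'cV[R]_n) (m : nat) (lambda : R) (k : nat).

Lemma alphaAAE : alphaAA g x m lambda k = ridge_coef (Umat g x m k) lambda (g (x k)).
Proof. by []. Qed.

Lemma PiAA_mulmx :
  PiAA g x m lambda k *m g (x k) = g (x k) - Umat g x m k *m alphaAA g x m lambda k.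
Proof. by rewrite mulmxBl mul1mx /alphaAA !mulmxA. Qed.

End AndersonCoefficients.

Section AndersonStep.
Context {R : realType} {n p : nat}.

Lemma anderson_step_decomposition (a : 'cV[R]_p) (X gX : 'cV[R]_n)
    (Y gY : 'I_p -> 'cV[R]_n) (eta : R) :
  \sum_j a j 0 *: (Y j - eta *: gY j) + (1 - \sum_j a j 0) *: (X - eta *: gX)
  = X - eta *: (gX - \sum_j a j 0 *: (gX - gY j)) - \sum_j a j 0 *: (X - Y j).
Proof.
have comb_sub u (V : 'I_p -> 'cV[R]_n) :
    \sum_j a j 0 *: (u - V j) = (\sum_j a j 0) *: u - \sum_j a j 0 *: V j.
  by rewrite scaler_suml -sumrB; apply: eq_bigr => j _; rewrite scalerBr.
have comb_step : \sum_j a j 0 *: (Y j - eta *: gY j)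
                 = \sum_j a j 0 *: Y j - eta *: \sum_j a j 0 *: gY j.
  by rewrite scaler_sumr -sumrB; apply: eq_bigr => j _; rewrite scalerBr !scalerA mulrC.
rewrite comb_step !comb_sub; apply/matrixP => i k; rewrite !mxE; ring.
Qed.

End AndersonStep.

Section PerturbedGradientStep.
Context {R : realType} {n : nat}.
Variables (g : 'cV[R]_n -> 'cV[R]_n) (S : 'M[R]_n) (xs : 'cV[R]_n).
Variables (mu L eta eps r : R).
Hypotheses (S_sym : S^T = S) (S_within : qform_within S mu L).
Hypotheses (mu_gt0 : 0 < mu) (mu_le_L : mu <= L).
Hypotheses (eta_gt0 : 0 < eta) (eta_le : eta * (L + mu) <= 2).
Hypotheses (eps_ge0 : 0 <= eps) (eps_le : eps <= mu / 2).
Hypothesis g_lin : forall y : 'cV[R]_n, enorm (y - xs) < r ->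
  enorm (g y - S *m (y - xs)) <= eps * enorm (y - xs).

Lemma dist_le_gradient (y : 'cV[R]_n) :
  enorm (y - xs) < r -> mu * enorm (y - xs) <= 2 * enorm (g y).
Proof.
move=> y_near; have := enorm_mulmx_ge S_within (y - xs).
have := enormB (g y) (g y - S *m (y - xs)); rewrite opprB addrC subrK.
have := g_lin y_near; have := ler_wpM2r (enorm_ge0 (y - xs)) eps_le.
by nra.
Qed.

Lemma gradient_le_dist (y : 'cV[R]_n) :
  enorm (y - xs) < r -> enorm (g y) <= (L + eps) * enorm (y - xs).
Proof.
move=> y_near; rewrite -(subrK (S *m (y - xs)) (g y)) mulrDl addrC.
apply: le_trans (enormD _ _) (lerD _ (g_lin y_near)).
exact: enorm_mulmx_le.
Qed.

Lemma perturbed_gradient_step (y y' w d : 'cV[R]_n) (th : R) :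
  enorm (y - xs) < r -> enorm (y' - xs) < r -> 0 <= th <= 1 ->
  y' = y - eta *: (g y - w) - d ->
  enorm w <= th * enorm (g y) -> enorm d <= th * enorm (g y) ->
  enorm (g y') <= (1 - eta * mu) * enorm (g y - w)
                  + (th + eps) * (2 + L + 4 / mu + 2 * eta) * enorm (g y).
Proof.
move=> y_near y'_near /andP[th_ge0 th_le1] y'E w_le d_le.
set G := enorm (g y); set e := y - xs; set e' := y' - xs.
have G_ge0 : 0 <= G by exact: enorm_ge0.
have e_le : enorm e <= 2 / mu * G.
  by rewrite mulrAC ler_pdivlMr // mulrC (dist_le_gradient y_near).
have e'E : e' = e - eta *: (g y - w) - d.
  by rewrite /e' y'E; apply/matrixP => i j; rewrite !mxE; ring.
have e'_le : enorm e' <= enorm e + eta * (G + th * G) + th * G.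
  rewrite e'E; apply: le_trans (enormB _ _) (lerD _ d_le).
  apply: le_trans (enormB _ _) (lerD (lexx _) _).
  rewrite enormZ ger0_norm ?(ltW eta_gt0) // ler_wpM2l ?(ltW eta_gt0) //.
  exact: le_trans (enormB _ _) (lerD (lexx _) w_le).
have -> : g y' = (g y - w) - eta *: (S *m (g y - w)) + w - (g y - S *m e) - S *m d
                 + (g y' - S *m e').
  rewrite e'E !(mulmxBr, scalemxAr); apply/matrixP => i j; rewrite !mxE; ring.
have Sd_le : enorm (S *m d) <= L * (th * G).
  have L_ge0 : 0 <= L := le_trans (ltW mu_gt0) mu_le_L.
  exact: le_trans (enorm_mulmx_le S_sym S_within mu_gt0 mu_le_L d) (ler_wpM2l L_ge0 d_le).
have := gd_contraction S_sym S_within mu_le_L (g y - w) eta_gt0 eta_le.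
rewrite -/e -/e' => P_le.
have c_ge0 : 0 <= 2 / mu by rewrite divr_ge0 // ltW.
have B_le : enorm (g y - S *m e) <= eps * (2 / mu * G).
  exact: le_trans (g_lin y_near) (ler_wpM2l eps_ge0 e_le).
have D_le : enorm (g y' - S *m e') <= eps * (2 / mu * G + 2 * eta * G + G).
  apply: le_trans (g_lin y'_near) (ler_wpM2l eps_ge0 _); apply: le_trans e'_le _.
  have := ler_wpM2l (ltW eta_gt0) (ler_wpM2r G_ge0 th_le1); have := ler_wpM2r G_ge0 th_le1.
  by nra.
apply: le_trans (enormD _ _) _; apply: le_trans (lerD (enormB _ _) D_le) _.
apply: le_trans (lerD (lerD (enormB _ _) Sd_le) (lexx _)) _.
apply: le_trans (lerD (lerD (lerD (enormD _ _) B_le) (lexx _)) (lexx _)) _.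
apply: le_trans (lerD (lerD (lerD (lerD P_le w_le) (lexx _)) (lexx _)) (lexx _)) _.
have -> : 4 / mu = 2 * (2 / mu) by ring.
have : 0 <= th * G * (1 + 2 * (2 / mu) + 2 * eta).
  by rewrite !mulr_ge0 // !addr_ge0 // mulr_ge0 // ltW.
have : 0 <= eps * G * (1 + L).
  by rewrite !mulr_ge0 // addr_ge0 // (le_trans (ltW mu_gt0)).
by rewrite -/G; nra.
Qed.

End PerturbedGradientStep.

Lemma cvg_excess_to0 {R : realType} (a b : nat -> R) :
  (forall tau, 0 < tau -> \forall k \near \oo, a k <= b k + tau) ->
  (fun k => Num.max 0 (a k - b k)) @ \oo --> 0.
Proof.
move=> ev; apply/cvgr0Pnorm_le => tau tau_gt0; apply: filterS (ev _ tau_gt0) => k ab.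
rewrite ger0_norm; last by rewrite le_max lexx.
by rewrite ge_max (ltW tau_gt0) lerBlDl.
Qed.

Lemma enorm_cvg_near {R : realType} {n : nat} (x : nat -> 'cV[R]_n) (xs : 'cV[R]_n) :
  x @ \oo --> xs -> forall r : R, 0 < r -> \forall k \near \oo, enorm (x k - xs) < r.
Proof.
move=> /cvgrPdist_lt x_cvg r r_gt0.
have n1_gt0 : 0 < n%:R + 1 :> R by rewrite ltr_wpDl.
apply: filterS (x_cvg _ (divr_gt0 r_gt0 n1_gt0)) => k; rewrite distrC => near_k.
apply: le_lt_trans (enorm_le_mxnorm _) _.
rewrite ltr_pdivlMr // in near_k; apply: le_lt_trans near_k.
by rewrite mulrC ler_wpM2l // lerDl.
Qed.

Lemma window_cvg_near {R : realType} {n : nat} (x : nat -> 'cV[R]_n) (xs : 'cV[R]_n) m :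
  x @ \oo --> xs -> forall r : R, 0 < r ->
  \forall k \near \oo, forall i, (k - m <= i <= k.+1)%N -> enorm (x i - xs) < r.
Proof.
move=> x_cvg r r_gt0; have [N _ near_N] := enorm_cvg_near x_cvg r_gt0.
exists (N + m)%N => // k /= k_ge i /andP[i_ge _]; apply: near_N => /=.
by move: k_ge i_ge; clear; lia.
Qed.

Lemma window_index_bounds m k (j : 'I_(mk m k)) : (k - m <= k - mk m k + j <= k.+1)%N.
Proof. by have := ltn_ord j; rewrite /mk; lia. Qed.

Section AndersonLocalRate.
Context {R : realType} {n : nat}.
Variables (g : 'cV[R]_n -> 'cV[R]_n) (S : 'M[R]_n) (xs : 'cV[R]_n).
Variables (mu L eta lambda : R) (m : nat) (x : nat -> 'cV[R]_n).
Hypotheses (S_sym : S^T = S) (S_within : qform_within S mu L).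
Hypotheses (mu_gt0 : 0 < mu) (mu_le_L : mu <= L).
Hypotheses (eta_gt0 : 0 < eta) (eta_le : eta * (L + mu) <= 2).
Hypotheses (lambda_gt0 : 0 < lambda) (m_gt0 : (0 < m)%N).
Hypothesis aagd : forall k, (1 <= k)%N ->
  let a := alphaAA g x m lambda k in
  x k.+1 = \sum_(j < mk m k) a j 0 *: Gmap eta g (x (k - mk m k + j)%N)
           + (1 - \sum_(j < mk m k) a j 0) *: Gmap eta g (x k).

Lemma col_Umat k j : col j (Umat g x m k) = g (x k) - g (x (k - mk m k + j)%N).
Proof. by apply/matrixP => i l; rewrite ord1 !mxE. Qed.

Lemma aagd_step_eq k : (1 <= k)%N ->
  x k.+1 = x k - eta *: (g (x k) - Umat g x m k *m alphaAA g x m lambda k)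
           - \sum_j alphaAA g x m lambda k j 0 *: (x k - x (k - mk m k + j)%N).
Proof.
move=> k_ge1; rewrite aagd // /Gmap anderson_step_decomposition mulmx_sum_col.
by under [in RHS]eq_bigr => j _ do rewrite col_Umat.
Qed.

(* In the r-ball the columns of U_k and the differences x_k - x_j have length
   at most s, and m s^2 <= th lambda then makes both Anderson corrections at most
   th |g (x k)|. *)
Lemma aagd_local_step k (eps th s r : R) : (1 <= k)%N ->
  0 <= eps <= mu / 2 -> 0 <= th <= 1 -> 0 <= s ->
  m%:R * s ^+ 2 <= th * lambda -> 2 * (L + eps + 1) * r <= s ->
  (forall y, enorm (y - xs) < r -> enorm (g y - S *m (y - xs)) <= eps * enorm (y - xs)) ->
  (forall i, (k - m <= i <= k.+1)%N -> enorm (x i - xs) < r) ->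
  enorm (g (x k.+1)) <= (1 - eta * mu) * enorm (PiAA g x m lambda k *m g (x k))
    + (th + eps) * (2 + L + 4 / mu + 2 * eta) * enorm (g (x k)).
Proof.
move=> k_ge1 /andP[eps_ge0 eps_le] th_01 s_ge0 s_small r_small g_lin x_near.
set p := mk m k; set a := alphaAA g x m lambda k; set G := enorm (g (x k)).
have p_le_m : (p <= m)%N by rewrite /p /mk geq_minl.
have near_k : enorm (x k - xs) < r by apply: x_near; rewrite leq_subr leqnSn.
have near_k1 : enorm (x k.+1 - xs) < r.
  by apply: x_near; rewrite leqnn andbT (leq_trans (leq_subr m k)).
have near_j (j : 'I_p) : enorm (x (k - p + j)%N - xs) < r.
  by apply/x_near/window_index_bounds.
have r_ge0 : 0 <= r by apply: ltW (le_lt_trans (enorm_ge0 _) near_k).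
have L_ge0 : 0 <= L := le_trans (ltW mu_gt0) mu_le_L.
have grad_le i : enorm (x i - xs) < r -> enorm (g (x i)) <= (L + eps) * r.
  move=> near_i; apply: le_trans (gradient_le_dist S_sym S_within mu_gt0 mu_le_L g_lin near_i) _.
  by apply: ler_wpM2l (ltW near_i); lra.
have col_le j : enorm (col j (Umat g x m k)) <= s.
  rewrite col_Umat; apply: le_trans (enormB _ _) (le_trans _ r_small).
  by have := lerD (grad_le _ near_k) (grad_le _ (near_j j)); nra.
have disp_le (j : 'I_p) : enorm (x k - x (k - p + j)%N) <= s.
  have -> : x k - x (k - p + j)%N = (x k - xs) - (x (k - p + j)%N - xs).
    by rewrite opprB addrA subrK.
  apply: le_trans (enormB _ _) (le_trans _ r_small).
  by have := near_j j; have := near_k; nra.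
have corr_le (D : 'I_p -> 'cV[R]_n) : (forall j, enorm (D j) <= s) ->
    enorm (\sum_j a j 0 *: D j) <= th * G.
  move=> D_le; rewrite /a alphaAAE.
  apply: le_trans (enorm_ridge_comb_le (g (x k)) lambda_gt0 s_ge0 col_le D_le) _.
  have ps_le : p%:R * s ^+ 2 <= th * lambda.
    by apply: le_trans s_small; rewrite ler_wpM2r ?sqr_ge0 // ler_nat.
  rewrite ler_pdivrMr // -/G; have := ler_wpM2l (enorm_ge0 (g (x k))) ps_le.
  by rewrite -/G; nra.
have w_le : enorm (Umat g x m k *m a) <= th * G.
  by rewrite mulmx_sum_col; apply: corr_le.
rewrite PiAA_mulmx.
exact: (perturbed_gradient_step S_sym S_within mu_gt0 mu_le_L eta_gt0 eta_le eps_ge0 eps_le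
  g_lin near_k near_k1 th_01 (aagd_step_eq k_ge1) w_le (corr_le _ disp_le)).
Qed.

Hypotheses (g_xs : g xs = 0) (g_frechet : frechet_at g xs S).
Hypotheses (x_cvg : x @ \oo --> xs) (g_neq0 : forall k, g (x k) != 0).

Lemma aagd_ratio_near tau : 0 < tau -> \forall k \near \oo,
  enorm (g (x k.+1)) / enorm (g (x k))
    <= enorm (PiAA g x m lambda k *m g (x k)) / enorm (g (x k)) * (1 - eta * mu) + tau.
Proof.
move=> tau_gt0; set K := 2 + L + 4 / mu + 2 * eta.
have L_ge0 : 0 <= L := le_trans (ltW mu_gt0) mu_le_L.
have K_gt0 : 0 < K.
  by rewrite /K; have := divr_gt0 (ltr0n _ 4) mu_gt0; have := eta_gt0; lra.
set e := tau / K / 2; have e_gt0 : 0 < e by rewrite !divr_gt0.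
set eps := Num.min (mu / 2) e; set th := Num.min 1 e.
have eps_gt0 : 0 < eps by rewrite lt_min e_gt0 divr_gt0.
have th_gt0 : 0 < th by rewrite lt_min ltr01.
have [d d_gt0 lin] := g_frechet eps_gt0.
have m_R_gt0 : 0 < m%:R :> R by rewrite ltr0n.
set s := Num.min 1 (th * lambda / m%:R).
have s_gt0 : 0 < s by rewrite lt_min ltr01 !divr_gt0 ?mulr_gt0.
have s_small : m%:R * s ^+ 2 <= th * lambda.
  have s_le1 : s <= 1 by rewrite ge_min lexx.
  have s_le : s <= th * lambda / m%:R by rewrite ge_min lexx orbT.
  rewrite -ler_pdivlMl // expr2.
  by apply: le_trans (ler_pM (ltW s_gt0) (ltW s_gt0) s_le1 s_le) _; rewrite mul1r mulrC.
have L_eps_gt0 : 0 < 2 * (L + eps + 1) by lra.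
set r := Num.min d (s / (2 * (L + eps + 1))).
have r_gt0 : 0 < r by rewrite lt_min d_gt0 divr_gt0.
have r_small : 2 * (L + eps + 1) * r <= s by rewrite mulrC -ler_pdivlMr // ge_min lexx orbT.
have r_le_d : r <= d by rewrite ge_min lexx.
have g_lin y : enorm (y - xs) < r -> enorm (g y - S *m (y - xs)) <= eps * enorm (y - xs).
  by move=> /lt_le_trans /(_ r_le_d) /lin; rewrite subrK g_xs subr0.
have eps_01 : 0 <= eps <= mu / 2 by rewrite (ltW eps_gt0) ge_min lexx.
have th_01 : 0 <= th <= 1 by rewrite (ltW th_gt0) ge_min lexx.
have err_le : (th + eps) * K <= tau.
  rewrite -ler_pdivlMr // (splitr (tau / K)) -/e.
  by apply: lerD; rewrite ge_min lexx orbT.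
apply: filterS2 (nbhs_infty_ge 1) (window_cvg_near m x_cvg r_gt0) => k k_ge1 x_near.
have G_gt0 := enorm_gt0 (g_neq0 k).
have := aagd_local_step k_ge1 eps_01 th_01 (ltW s_gt0) s_small r_small g_lin x_near.
set G := enorm (g (x k)); set P := enorm (_ *m g (x k)); rewrite -/K => step.
have -> : P / G * (1 - eta * mu) + tau = ((1 - eta * mu) * P + tau * G) / G.
  by field; rewrite gt_eqF.
rewrite ler_pM2r ?invr_gt0 //; apply: le_trans step _.
by rewrite lerD2l ler_wpM2r // ltW.
Qed.

End AndersonLocalRate.

Theorem theorem3p2 (R : realType) (n : nat)
  (f : 'cV[R]_n -> R) (g : 'cV[R]_n -> 'cV[R]_n) (H : 'cV[R]_n -> 'M[R]_n)
  (mu L : R) (xstar : 'cV[R]_n) (eta : R) (m : nat) (lambda : R)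
  (x : nat -> 'cV[R]_n) :
  (* f is C^2 with gradient g and Hessian H *)
  (forall y, differentiable f y /\ forall v, 'd f y v = \sum_(i < n) g y i 0 * v i 0) ->
  (forall y, differentiable g y /\ forall v, 'd g y v = H y *m v) ->
  continuous H ->
  (* eigenvalues of the Hessian lie in [mu, L] *)
  0 < mu -> mu <= L ->
  (forall y a, eigenvalue (H y) a -> mu <= a <= L) ->
  (* xstar is a minimizer *)
  (forall y, f xstar <= f y) ->
  0 < eta -> eta <= 2 / (L + mu) ->
  (1 <= m)%N -> 0 < lambda ->
  AAGD_seq eta g m lambda x ->
  (forall k, g (x k) != 0) ->
  x @ \oo --> xstar ->
  exists o : nat -> R, o @ \oo --> (0 : R) /\
    \forall k \near \oo,
      let delta := enorm (PiAA g x m lambda k *m g (x k)) / enorm (g (x k)) in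
      delta <= 1 /\
      enorm (g (x k.+1)) / enorm (g (x k)) <= delta * (1 - eta * mu) + o k.
Proof.
move=> f_grad g_diff _ mu_gt0 mu_le_L H_spec xs_min eta_gt0 eta_le m_ge1 lambda_gt0
  [_ aagd] g_neq0 x_cvg.
have g_frechet := differentiable_frechet_at (g_diff xstar).1 (g_diff xstar).2.
have S_sym := hessian_sym f_grad g_frechet.
have S_within := qform_within_eigenvalues S_sym (H_spec xstar).
have g_xs := gradient_eq0_at_min f_grad xs_min.
have Lmu_gt0 : 0 < L + mu by rewrite addr_gt0 // (lt_le_trans mu_gt0).
have eta_le' : eta * (L + mu) <= 2 by rewrite -ler_pdivlMr.
pose ratio k := enorm (g (x k.+1)) / enorm (g (x k)).
pose bound k := enorm (PiAA g x m lambda k *m g (x k)) / enorm (g (x k)) * (1 - eta * mu).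
exists (fun k => Num.max 0 (ratio k - bound k)); split.
  apply: (@cvg_excess_to0 _ ratio bound) => tau tau_gt0.
  rewrite /ratio /bound.
  exact: (aagd_ratio_near S_sym S_within mu_gt0 mu_le_L eta_gt0 eta_le' lambda_gt0 m_ge1
    aagd g_xs g_frechet x_cvg g_neq0 tau_gt0).
apply: nearW => k /=; split.
  rewrite ler_pdivrMr ?enorm_gt0 // mul1r PiAA_mulmx alphaAAE.
  exact: enorm_ridge_residual_le.
by rewrite -lerBlDl le_max lexx orbT.
Qed.
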